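(* Let $T$ be an $\mathcal O$-operator on a Lie algebra $\mathfrak g$ with respect to a representation $(V;\rho)$ and let $x\in\mathfrak g$ be a Nijenhuis element associated to $T$. Then $\rho(x)$ is a Nijenhuis operator on the pre-Lie algebra $(V,\cdot_T)$.
   Context: An $\mathcal O$-operator: linear $T:V\to\mathfrak g$ with $[Tu,Tv]=T(\rho(Tu)(v)-\rho(Tv)(u))$; it induces the pre-Lie product $u\cdot_Tv=\rho(Tu)(v)$ on $V$. An element $x\in\mathfrak g$ is a Nijenhuis element associated to $T$ if $[[x,y],[x,z]]=0$ for all $y,z\in\mathfrak g$, $\rho([x,y])\rho(x)=0$ for all $y\in\mathfrak g$, and $[x,[Tu,x]+T\rho(x)(u)]=0$ for all $u\in V$. A Nijenhuis operator on a pre-Lie algebra $(V,\cdot)$ is a linear $N:V\to V$ with $(Nu)\cdot(Nv)=N((Nu)\cdot v+u\cdot(Nv)-N(u\cdot v))$ for all $u,v\in V$. *)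

From HB Require Import structures.
From mathcomp Require Import all_boot all_order all_algebra.
Set Implicit Arguments. Unset Strict Implicit. Unset Printing Implicit Defensive.
Import GRing.Theory.
Local Open Scope ring_scope.

Record is_lie_algebra (K : fieldType) (g : lmodType K) (br : g -> g -> g) : Prop := {
  lie_linl : forall z, linear (fun x => br x z);
  lie_linr : forall x, linear (br x);
  lie_alt : forall x, br x x = 0;
  lie_jacobi : forall x y z, br x (br y z) + br y (br z x) + br z (br x y) = 0
}.

Record is_representation (K : fieldType) (g V : lmodType K)
    (br : g -> g -> g) (rho : g -> V -> V) : Prop := {
  rep_lin : forall (a : K) (x y : g) (v : V), rho (a *: x + y) v = a *: rho x v + rho y v;
  rep_linV : forall x, linear (rho x);
  rep_hom : forall x y v, rho (br x y) v = rho x (rho y v) - rho y (rho x v)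
}.

Definition is_O_operator (K : fieldType) (g V : lmodType K)
    (br : g -> g -> g) (rho : g -> V -> V) (T : V -> g) : Prop :=
  linear T /\
  forall u v, br (T u) (T v) = T (rho (T u) v - rho (T v) u).

Definition preLie_T (K : fieldType) (g V : lmodType K)
    (rho : g -> V -> V) (T : V -> g) (u v : V) : V := rho (T u) v.

Definition is_Nijenhuis_element (K : fieldType) (g V : lmodType K)
    (br : g -> g -> g) (rho : g -> V -> V) (T : V -> g) (x : g) : Prop :=
  (forall y z, br (br x y) (br x z) = 0) /\
  (forall y (v : V), rho (br x y) (rho x v) = 0) /\
  (forall u, br x (br (T u) x + T (rho x u)) = 0).

Definition is_Nijenhuis_operator (K : fieldType) (V : lmodType K)
    (mul : V -> V -> V) (N : V -> V) : Prop :=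
  linear N /\
  forall u v, mul (N u) (N v) = N (mul (N u) v + mul u (N v) - N (mul u v)).

From mathcomp Require Import all_boot all_order all_algebra.
Import GRing.Theory.
Local Open Scope ring_scope.

(* Write N = rho x, a = T (N u) and b = T u.  Applying the representation to
   the vanishing bracket [x, [b, x] + a] and evaluating at v gives
   N (rho b (N v) - N (rho b v) + rho a v) = rho a (N v) + rho [x, b] (N v),
   and the last term vanishes by the second Nijenhuis condition. *)

Section RepresentationIdentities.

Variables (K : fieldType) (g V : lmodType K).
Variables (br : g -> g -> g) (rho : g -> V -> V).
Hypothesis rhoR : is_representation br rho.

Lemma repDl (y z : g) (v : V) : rho (y + z) v = rho y v + rho z v.
Proof. by have := rep_lin rhoR 1 y z v; rewrite !scale1r. Qed.

Lemma rep0l (v : V) : rho 0 v = 0.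
Proof. by have := rep_lin rhoR (-1) 0 0 v; rewrite !scaleN1r !addNr. Qed.

Lemma rep_Nijenhuis_identity (x a b : g) :
  (forall w, rho (br x b) (rho x w) = 0) -> br x (br b x + a) = 0 ->
  forall v, rho a (rho x v) = rho x (rho a v + rho b (rho x v) - rho x (rho b v)).
Proof.
move=> xb_rhox x_bxa v.
have comm_b : rho b (rho x (rho x v)) - rho x (rho b (rho x v)) = 0.
  by rewrite -opprB -(rep_hom rhoR) xb_rhox oppr0.
have := rep0l v; rewrite -x_bxa (rep_hom rhoR) !repDl !(rep_hom rhoR).
rewrite opprD comm_b oppr0 add0r => /subr0_eq <-.
by rewrite addrC addrA.
Qed.

End RepresentationIdentities.

Theorem proposition4p11 (K : fieldType) (g V : lmodType K)
    (br : g -> g -> g) (rho : g -> V -> V) (T : V -> g) (x : g) :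
  is_lie_algebra br ->
  is_representation br rho ->
  is_O_operator br rho T ->
  is_Nijenhuis_element br rho T x ->
  is_Nijenhuis_operator (preLie_T rho T) (rho x).
Proof.
move=> _ rhoR _ [_ [x_rhox x_bracket]].
split; first exact: rep_linV rhoR x.
move=> u v; rewrite /preLie_T.
exact: rep_Nijenhuis_identity rhoR _ _ _ (x_rhox (T u)) (x_bracket u) v.
Qed.
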